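(* Let $q\ge8$ be even and $\mu\in\mathbb F_q^*\setminus\{1\}$. The points $\mathbf P(1,0,1,0)$ and $\mathbf P(0,\mu,0,1)$ of $\ell_\mu$ lie on the tangents $\mathcal T_1$ and $\mathcal T_{\sqrt\mu}$, respectively, and no other point of $\ell_\mu$ is a $T$-point. Consequently, for the $G_q$-orbit $\mathcal O_\mu$ of $\ell_\mu$, the number of $T$-points on each line of $\mathcal O_\mu$ is $P_T=2$.
   Context: In $\mathrm{PG}(3,q)$ with points $\mathbf P(x_0,x_1,x_2,x_3)$, put $P(t)=\mathbf P(t^3,t^2,t,1)$ for $t\in\mathbb F_q$ and $P(\infty)=\mathbf P(1,0,0,0)$; the twisted cubic is $\mathcal C=\{P(t)\}$ and $G_q$ is the group of projectivities fixing $\mathcal C$. The tangent $\mathcal T_t$ at $P(t)$, $t\in\mathbb F_q$, is the line through $P(t)$ and $\mathbf P(3t^2,2t,1,0)$; $\mathcal T_\infty$ is the line through $\mathbf P(1,0,0,0),\mathbf P(0,1,0,0)$. $T$-points are points off $\mathcal C$ on a tangent. $\ell_\mu$ is the line through $\mathbf P(0,\mu,0,1)$ and $\mathbf P(1,0,1,0)$; $\sqrt\mu$ is the unique square root of $\mu$ in $\mathbb F_q$. *)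

(* PG(3,q) over a finite field F; projective points are
   represented by their (canonical) row spaces <<v>>%MS : 'M[F]_4. *)
From HB Require Import structures.
From mathcomp Require Import all_boot all_order all_algebra.
Set Implicit Arguments. Unset Strict Implicit. Unset Printing Implicit Defensive.
Import GRing.Theory.
Local Open Scope ring_scope.

Section PG3.
Variable F : finFieldType.

Definition vec4 (a b c d : F) : 'rV[F]_4 := \row_(i < 4) nth 0 [:: a; b; c; d] i.

Definition pt (v : 'rV[F]_4) : 'M[F]_4 := (<<v>>)%MS.

Definition PGpoints : {set 'M[F]_4} := [set pt v | v in [set v : 'rV[F]_4 | v != 0]].

(* parameters t in F ∪ {∞}: Some t = t, None = ∞ *)
Definition Cvec (t : option F) : 'rV[F]_4 :=
  match t with
  | Some t => vec4 (t ^+ 3) (t ^+ 2) t 1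
  | None => vec4 1 0 0 0
  end.

Definition curve : {set 'M[F]_4} := [set pt (Cvec t) | t : option F].

Definition Tvec (t : option F) : 'rV[F]_4 :=
  match t with
  | Some t => vec4 (3%:R * t ^+ 2) (2%:R * t) 1 0
  | None => vec4 0 1 0 0
  end.

Definition tangent (t : option F) : 'M[F]_(2, 4) := col_mx (Cvec t) (Tvec t).

Definition Tpoint (X : 'M[F]_4) : bool :=
  [&& X \in PGpoints, X \notin curve & [exists t : option F, (X <= tangent t)%MS]].

Definition ell (mu : F) : 'M[F]_(2, 4) := col_mx (vec4 0 mu 0 1) (vec4 1 0 1 0).

Definition Gq : {set 'M[F]_4} :=
  [set A : 'M[F]_4 | (A \in unitmx) && ([set pt (Cvec t *m A) | t : option F] == curve)].

Definition nTpoints (L : 'M[F]_(2, 4)) : nat :=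
  #|[set X in PGpoints | (X <= L)%MS && Tpoint X]|.

End PG3.

(* In characteristic 2 the tangent T_t is spanned by P(t) and (t^2, 0, 1, 0), so
   P(1,0,1,0) lies on T_1 and P(0,mu,0,1) = P(s) + s (s^2,0,1,0) on T_s; writing a point of
   l_mu on T_t in both bases forces it to be one of these two, as mu <> 1.
   For the orbit, a projectivity A fixing C maps tangents to tangents. Indeed C lies on the
   quadrics x0x2 = x1^2, x1x3 = x2^2, x0x3 = x1x2, and the tangent at P is the intersection
   of their polar hyperplanes at P. Each quadric, restricted to the image under A of the
   cubic arc u |-> P(t + u), is a polynomial of degree at most 6 vanishing on F; as q >= 8
   it is zero, and its linear coefficient is the polar form at A P(t) evaluated on the
   image of the tangent direction. So A permutes T-points and every line of the orbit
   carries exactly the two T-points of l_mu. *)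

From HB Require Import structures.
From mathcomp Require Import all_boot all_order all_algebra.
From mathcomp Require Import ring zify.
Set Implicit Arguments. Unset Strict Implicit. Unset Printing Implicit Defensive.
Import GRing.Theory.
Local Open Scope ring_scope.

Lemma eq_lincomb (R : ringType) (x y c1 c2 h1 h2 : R) :
  h1 = 0 -> h2 = 0 -> x - y = c1 * h1 + c2 * h2 -> x = y.
Proof. by move=> -> -> /eqP; rewrite !mulr0 addr0 subr_eq0 => /eqP. Qed.

Arguments eq_lincomb {R x y} c1 c2 {h1 h2}.

Lemma sub_span2P (K : fieldType) n (v c d : 'rV[K]_n) :
  reflect (exists a b, v = a *: c + b *: d) (v <= col_mx c d)%MS.
Proof.
rewrite -addsmxE; apply: (iffP sub_addsmxP) => [[[x y] /= ->] | [a [b ->]]].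
  by exists (x 0 0), (y 0 0); rewrite {1}[x]mx11_scalar {1}[y]mx11_scalar !mul_scalar_mx.
by exists (a%:M, b%:M); rewrite /= !mul_scalar_mx.
Qed.

Lemma mulmx_unit_eq0 (K : fieldType) m n (v : 'M[K]_(m, n)) (A : 'M[K]_n) :
  A \in unitmx -> (v *m A == 0) = (v == 0).
Proof. by rewrite -row_free_unit => /mulmx_free_eq0. Qed.

Section Coordinates.
Variable F : finFieldType.
Implicit Types (a b c d : F) (v w : 'rV[F]_4).

Definition comp4 v (k : nat) : F := v 0 (inord k).

Lemma comp4_vec4 a b c d k : (k < 4)%N -> comp4 (vec4 a b c d) k = nth 0 [:: a; b; c; d] k.
Proof. by move=> lt_k4; rewrite /comp4 mxE inordK. Qed.

Lemma vec4_surj v : exists a b c d, v = vec4 a b c d.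
Proof.
exists (comp4 v 0), (comp4 v 1), (comp4 v 2), (comp4 v 3).
apply/rowP => i; rewrite mxE /comp4.
by case: i => [[|[|[|[|i]]]] lt_i4] //=; congr (v 0 _); apply/val_inj; rewrite /= inordK.
Qed.

Lemma vec4P a b c d a' b' c' d' :
  vec4 a b c d = vec4 a' b' c' d' -> [/\ a = a', b = b', c = c' & d = d'].
Proof.
move=> e; have comp4E k : (k < 4)%N -> nth 0 [:: a; b; c; d] k = nth 0 [:: a'; b'; c'; d'] k.
  by move=> lt_k4; rewrite -!comp4_vec4 // e.
by split; [exact: (comp4E 0%N) | exact: (comp4E 1%N) | exact: (comp4E 2%N) | exact: (comp4E 3%N)].
Qed.

Lemma add_vec4 a b c d a' b' c' d' :
  vec4 a b c d + vec4 a' b' c' d' = vec4 (a + a') (b + b') (c + c') (d + d').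
Proof. by apply/rowP => i; rewrite !mxE; case: i => [[|[|[|[|i]]]] ?]. Qed.

Lemma scale_vec4 x a b c d : x *: vec4 a b c d = vec4 (x * a) (x * b) (x * c) (x * d).
Proof. by apply/rowP => i; rewrite !mxE; case: i => [[|[|[|[|i]]]] ?]. Qed.

Lemma vec4_0 : vec4 0 0 0 0 = 0 :> 'rV[F]_4.
Proof. by apply/rowP => i; rewrite !mxE; case: i => [[|[|[|[|i]]]] ?]. Qed.

Lemma pt_sub v m (M : 'M[F]_(m, 4)) : (pt v <= M)%MS = (v <= M)%MS.
Proof. by rewrite /pt genmxE. Qed.

Lemma pt_eq_scale v w : pt v = pt w -> exists a, v = a *: w.
Proof. by move=> e; apply/sub_rVP; rewrite -pt_sub e pt_sub. Qed.

Lemma ptZ x v : x != 0 -> pt (x *: v) = pt v.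
Proof. by move=> x0; apply/eq_genmx/eqmx_scale. Qed.

Lemma genmx_pt_mulmx v (A : 'M[F]_4) : (<<pt v *m A>>)%MS = pt (v *m A).
Proof. exact/eq_genmx/eqmxMr/genmxE. Qed.

Lemma pt_mulmx v w (A : 'M[F]_4) : pt v = pt w -> pt (v *m A) = pt (w *m A).
Proof. by move=> e; rewrite -!genmx_pt_mulmx e. Qed.

Lemma pt_PGpointsE v : (pt v \in PGpoints F) = (v != 0).
Proof.
apply/imsetP/idP => [[w /[!inE] w0 /esym/pt_eq_scale [a ew]] | v0].
  by apply: contraNneq w0 => v0; rewrite ew v0 scaler0.
by exists v; rewrite ?inE.
Qed.

Lemma PGpointsP X : X \in PGpoints F -> exists2 v, v != 0 & X = pt v.
Proof. by case/imsetP => v /[!inE] v0 ->; exists v. Qed.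

End Coordinates.

Section TwistedCubic.
Variable F : finFieldType.
Implicit Types (v w : 'rV[F]_4) (A : 'M[F]_4) (t : option F).

Definition quadric (i j k l : nat) v : F := comp4 v i * comp4 v j - comp4 v k * comp4 v l.

Definition polar (i j k l : nat) v w : F :=
  comp4 v i * comp4 w j + comp4 w i * comp4 v j - (comp4 v k * comp4 w l + comp4 w k * comp4 v l).

Lemma quadricZ i j k l x v : quadric i j k l (x *: v) = x ^+ 2 * quadric i j k l v.
Proof. by rewrite /quadric /comp4 !mxE; ring. Qed.

Lemma polarZl i j k l x v w : polar i j k l (x *: v) w = x * polar i j k l v w.
Proof. by rewrite /polar /comp4 !mxE; ring. Qed.

Lemma quadrics_Cvec t : [/\ quadric 0 2 1 1 (Cvec t) = 0, quadric 1 3 2 2 (Cvec t) = 0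
  & quadric 0 3 1 2 (Cvec t) = 0].
Proof. by rewrite /quadric; case: t => [t|]; rewrite !comp4_vec4 //=; split; ring. Qed.

Lemma Cvec_neq0 t : Cvec t != 0.
Proof.
by rewrite -vec4_0; apply/eqP; case: t => [t|] /vec4P [] => [_ _ _|] /eqP; rewrite oner_eq0.
Qed.

Lemma Cvec_sub_tangent t : (Cvec t <= tangent t)%MS.
Proof. by apply/sub_span2P; exists 1, 0; rewrite scale1r scale0r addr0. Qed.

Lemma polar_sub_tangent t w : polar 0 2 1 1 (Cvec t) w = 0 -> polar 1 3 2 2 (Cvec t) w = 0 ->
  polar 0 3 1 2 (Cvec t) w = 0 -> (w <= tangent t)%MS.
Proof.
have [w0 [w1 [w2 [w3 ->]]]] := vec4_surj w.
rewrite /polar; case: t => [t|]; rewrite !comp4_vec4 //= => B1 B2 B3; apply/sub_span2P.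
  exists w3, (w2 - t * w3); rewrite !scale_vec4 add_vec4; congr vec4.
  - by apply: (eq_lincomb 1 t B3 B2); ring.
  - by apply: (eq_lincomb 1 0 B2 B3); ring.
  - by ring.
  - by ring.
exists w0, w1; rewrite !scale_vec4 add_vec4; congr vec4.
- by ring.
- by ring.
- by apply: (eq_lincomb 1 0 B1 B3); ring.
- by apply: (eq_lincomb 1 0 B3 B1); ring.
Qed.

(* [(taylor t)`_k] is the coefficient of u^k in P(t + u); for t = oo it is that of
   (1, u, u^2, u^3), which is P(1/u) up to the factor u^3. *)
Definition taylor t : seq 'rV[F]_4 :=
  [:: Cvec t, Tvec t & if t is Some t0 then [:: vec4 (3%:R * t0) 1 0 0; vec4 1 0 0 0]
                       else [:: vec4 0 0 1 0; vec4 0 0 0 1]].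

Lemma taylor_curve t u : exists a s, \sum_(k < 4) u ^+ k *: (taylor t)`_k = a *: Cvec s.
Proof.
rewrite !big_ord_recr big_ord0 /= add0r.
case: t => [t|]; rewrite !scale_vec4 !add_vec4.
  by exists 1, (Some (t + u)); rewrite scale_vec4; congr vec4; ring.
have [->|u0] := eqVneq u 0.
  by exists 1, None; rewrite scale_vec4 expr0n /=; congr vec4; ring.
by exists (u ^+ 3), (Some u^-1); rewrite scale_vec4; congr vec4; field.
Qed.

Definition maps_curve A := forall s, exists x s', Cvec s *m A = x *: Cvec s'.

Lemma Cvec_mulmx_scale_neq0 A t x t' : A \in unitmx -> Cvec t *m A = x *: Cvec t' -> x != 0.
Proof.
move=> Au eCA; apply: contraTneq (Cvec_neq0 t) => x0.
by rewrite negbK -(mulmx_unit_eq0 _ Au) eCA x0 scale0r.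
Qed.

Definition curve_preserving A := [/\ A \in unitmx, maps_curve A & maps_curve (invmx A)].

Lemma curve_scale v : pt v \in curve F -> exists a t, v = a *: Cvec t.
Proof. by case/imsetP => t _ /pt_eq_scale [a ->]; exists a, t. Qed.

Lemma Cvec_curve t : pt (Cvec t) \in curve F.
Proof. exact: imset_f. Qed.

Lemma Gq_curve_preserving A : A \in Gq F -> curve_preserving A.
Proof.
rewrite inE => /andP [Au /eqP curveA]; split=> // s.
  have /curve_scale [a [s' ->]] : pt (Cvec s *m A) \in curve F by rewrite -curveA; apply: imset_f.
  by exists a, s'.
have := Cvec_curve s; rewrite -curveA => /imsetP [s' _ /pt_eq_scale [a ->]].
by exists a, s'; rewrite -scalemxAl mulmxK.
Qed.

Lemma curve_preserving_inv A : curve_preserving A -> curve_preserving (invmx A).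
Proof. by case=> Au mapA mapAi; split; rewrite ?unitmx_inv ?invmxK. Qed.

Lemma curve_mulmx A v :
  A \in unitmx -> maps_curve A -> pt v \in curve F -> pt (v *m A) \in curve F.
Proof.
move=> Au mapA vC; have [a [t ev]] := curve_scale vC.
have [a0 | a0] := eqVneq a 0; first by move: vC; rewrite ev a0 !scale0r mul0mx.
have [x [t' eCA]] := mapA t; have x0 := Cvec_mulmx_scale_neq0 Au eCA.
by rewrite ev -scalemxAl eCA scalerA ptZ ?mulf_neq0 ?Cvec_curve.
Qed.

Section LargeField.
Hypothesis card_F : (7 <= #|F|)%N.

Lemma polar_velocity_eq0 i j k l (c : nat -> 'rV[F]_4) :
  (forall u, quadric i j k l (\sum_(m < 4) u ^+ m *: c m) = 0) -> polar i j k l (c 0%N) (c 1%N) = 0.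
Proof.
move=> Q0; pose phi n := \poly_(m < 4) comp4 (c m) n.
have phiE n u : (phi n).[u] = comp4 (\sum_(m < 4) u ^+ m *: c m) n.
  by rewrite horner_poly /comp4 summxE; apply: eq_bigr => m _; rewrite mxE mulrC.
have size_phiM (n n' : nat) : (size (phi n * phi n')%R <= 7)%N.
  apply: leq_trans (size_polyMleq _ _) _.
  have := size_poly 4 (fun m => comp4 (c m) n).
  by have := size_poly 4 (fun m => comp4 (c m) n'); rewrite /phi; lia.
pose Q := phi i * phi j - phi k * phi l.
have {}Q0 : Q = 0.
  apply: (roots_geq_poly_eq0 (rs := enum F)); first 2 last.
  - rewrite -cardE; apply: leq_trans card_F.
    by apply: leq_trans (size_polyD _ _) _; rewrite size_polyN geq_max !size_phiM.
  - by apply/allP => u _; rewrite /root /Q !hornerE !phiE; apply/eqP/Q0.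
  - exact: enum_uniq.
have := congr1 (fun p : {poly F} => p`_1) Q0.
by rewrite coef0 /Q coefB !coefM !big_ord_recr !big_ord0 /= !coef_poly /= !add0r => <-.
Qed.

Lemma tangent_mulmx A t : A \in unitmx -> maps_curve A ->
  exists t', (tangent t *m A <= tangent t')%MS.
Proof.
move=> Au mapA; have [x [t' eCA]] := mapA t; exists t'.
have x0 := Cvec_mulmx_scale_neq0 Au eCA.
have polar0 i j k l : (forall s, quadric i j k l (Cvec s) = 0) ->
    polar i j k l (Cvec t') (Tvec t *m A) = 0.
  move=> Q0; suff : x * polar i j k l (Cvec t') (Tvec t *m A) = 0.
    by move/eqP; rewrite mulf_eq0 (negbTE x0) => /eqP.
  rewrite -polarZl -eCA; apply: (polar_velocity_eq0 (c := fun m => (taylor t)`_m *m A)) => u.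
  rewrite (eq_bigr (fun m : 'I_4 => u ^+ m *: (taylor t)`_m *m A)) => [|m _]; last first.
    by rewrite scalemxAl.
  rewrite -mulmx_suml; have [a [s ->]] := taylor_curve t u.
  by rewrite -scalemxAl; have [y [s' ->]] := mapA s; rewrite !quadricZ Q0 !mulr0.
rewrite (mul_col_mx (Cvec t)) (@col_mx_sub _ 1 1) eCA scalemx_sub ?Cvec_sub_tangent //=.
by apply: polar_sub_tangent; apply: polar0 => s; case: (quadrics_Cvec s).
Qed.

Lemma Tpoint_mulmx A v : curve_preserving A -> Tpoint (pt v) -> Tpoint (pt (v *m A)).
Proof.
case=> Au mapA mapAi /and3P [vP vC /existsP [t vT]]; apply/and3P; split.
- by rewrite pt_PGpointsE mulmx_unit_eq0 // -pt_PGpointsE.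
- apply: contra vC => vAC; rewrite -[v](mulmxK Au).
  by apply: (curve_mulmx _ mapAi vAC); rewrite unitmx_inv.
- apply/existsP; have [t' At'] := tangent_mulmx t Au mapA; exists t'.
  by rewrite pt_sub (submx_trans _ At') // submxMr // -pt_sub.
Qed.

Lemma nTpoints_mulmx A L : curve_preserving A -> nTpoints (L *m A) = nTpoints L.
Proof.
move=> cpA; have [Au _ _] := cpA; have cpAi := curve_preserving_inv cpA.
rewrite /nTpoints -[RHS](card_in_imset (f := fun X => <<X *m A>>%MS)); last first.
  move=> X Y /[!inE] /andP [/PGpointsP [v _ ->] _] /andP [/PGpointsP [w _ ->] _].
  by rewrite !genmx_pt_mulmx => /(pt_mulmx (invmx A)); rewrite !mulmxK.
apply: eq_card => Y; rewrite inE; apply/andP/imsetP.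
  case=> /PGpointsP [w w0 ->] /andP [wLA wT]; exists (pt (w *m invmx A)).
    rewrite !inE pt_PGpointsE mulmx_unit_eq0 ?unitmx_inv // w0 Tpoint_mulmx // andbT.
    by rewrite pt_sub -[L](mulmxK Au) submxMr // -pt_sub.
  by rewrite genmx_pt_mulmx mulmxKV.
case=> X /[!inE] /andP [/PGpointsP [v v0 ->] /andP [vL vT]] ->.
rewrite genmx_pt_mulmx pt_PGpointsE mulmx_unit_eq0 // v0 Tpoint_mulmx // andbT.
by rewrite pt_sub submxMr // -pt_sub.
Qed.

End LargeField.
End TwistedCubic.

Section CharTwo.
Variable F : finFieldType.
Hypothesis char2 : 2%N \in [pchar F].

Lemma Tvec_char2 (t : F) : Tvec (Some t) = vec4 (t ^+ 2) 0 1 0.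
Proof.
have three1 : 3%:R = 1 :> F by rewrite (natrD F 2 1) (pcharf0 char2) add0r.
by rewrite /= three1 (pcharf0 char2) mul1r mul0r.
Qed.

Lemma ell_Tpoint (mu : F) X : mu != 1 -> X \in PGpoints F -> (X <= ell mu)%MS -> Tpoint X ->
  X = pt (vec4 1 0 1 0) \/ X = pt (vec4 0 mu 0 1).
Proof.
move=> mu1 /PGpointsP [v v0 ->]; rewrite pt_sub => /sub_span2P [a [b ev]].
case/and3P=> _ _ /existsP [t]; rewrite pt_sub => /sub_span2P [c [d]].
move: v0; rewrite {}ev !scale_vec4 add_vec4; case: t => [t|]; rewrite ?Tvec_char2 /=.
all: rewrite !scale_vec4 add_vec4 !(mulr0, mulr1, addr0, add0r) => v0 /vec4P [e0 e1 e2 e3].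
have [a0|a0] := eqVneq a 0.
  have b0 : b != 0 by apply: contraNneq v0 => b0; rewrite a0 b0 mul0r vec4_0.
  by left; rewrite a0 mul0r -[RHS](ptZ _ b0) scale_vec4 mulr1 mulr0.
have mu_t : mu = t ^+ 2 by apply/(mulfI a0); rewrite e1 e3.
have /eqP : b * (1 - mu) = 0 by rewrite mulrBr mulr1 mu_t {1}e0 e2; ring.
rewrite mulf_eq0 subr_eq0 [1 == _]eq_sym (negbTE mu1) orbF => /eqP b0.
by right; rewrite b0 -[RHS](ptZ _ a0) scale_vec4 mulr0 mulr1.
by move: v0; rewrite e2 e3 mul0r vec4_0 eqxx.
Qed.

Lemma pt1010_sub_tangent : (pt (vec4 1 0 1 0) <= tangent (Some (1 : F)))%MS.
Proof.
by rewrite pt_sub; apply/sub_span2P; exists 0, 1; rewrite Tvec_char2 expr1n scale0r add0r scale1r.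
Qed.

Lemma pt0mu01_sub_tangent (s : F) : (pt (vec4 0 (s ^+ 2) 0 1) <= tangent (Some s))%MS.
Proof.
rewrite pt_sub; apply/sub_span2P; exists 1, s.
rewrite Tvec_char2 /= !scale_vec4 add_vec4 !(mul1r, mulr0, mulr1, addr0) -exprS.
by rewrite !addrr_pchar2.
Qed.

Lemma Tpoint_pt1010 : Tpoint (pt (vec4 1 0 1 0 : 'rV[F]_4)).
Proof.
apply/and3P; split.
- by rewrite pt_PGpointsE -vec4_0; apply/eqP => /vec4P [] /eqP; rewrite oner_eq0.
- apply/negP => /curve_scale [a [[t|]]]; rewrite scale_vec4 => /vec4P [] /=.
    by rewrite mulr1 => e1 _ _ a0; move: e1; rewrite -a0 mul0r => /eqP; rewrite oner_eq0.
  by rewrite mulr0 => _ _ /eqP; rewrite oner_eq0.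
- by apply/existsP; exists (Some 1); exact: pt1010_sub_tangent.
Qed.

Lemma Tpoint_pt0mu01 (s : F) : s != 0 -> Tpoint (pt (vec4 0 (s ^+ 2) 0 1)).
Proof.
move=> s0; apply/and3P; split.
- by rewrite pt_PGpointsE -vec4_0; apply/eqP => /vec4P [_ _ _] /eqP; rewrite oner_eq0.
- apply/negP => /curve_scale [a [[t|]]]; rewrite scale_vec4 => /vec4P [] /=.
    rewrite mulr1 => _ e1 e2 a1; move: e2 e1; rewrite -a1 mul1r => <-.
    by rewrite expr0n /= mulr0n mulr0 => /eqP; rewrite expf_eq0 (negbTE s0) andbF.
  by rewrite mulr0 => _ _ _ /eqP; rewrite oner_eq0.
- by apply/existsP; exists (Some s); exact: pt0mu01_sub_tangent.
Qed.

Lemma nTpoints_ell (s : F) : s != 0 -> s ^+ 2 != 1 -> nTpoints (ell (s ^+ 2)) = 2.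
Proof.
move=> s0 mu1; rewrite /nTpoints.
rewrite (_ : [set X in _ | _] = [set pt (vec4 1 0 1 0); pt (vec4 0 (s ^+ 2) 0 1)]).
  rewrite cards2; case: eqP => // /pt_eq_scale [a].
  by rewrite scale_vec4 mulr0 => /vec4P [/eqP]; rewrite oner_eq0.
apply/setP => X; rewrite !inE; apply/andP/orP => [[XP /andP [XL XT]] | ].
  by case: (ell_Tpoint mu1 XP XL XT) => ->; [left | right].
have ell_pt (a b : F) : (pt (vec4 b (a * s ^+ 2)%R b a) <= ell (s ^+ 2))%MS.
  by rewrite pt_sub; apply/sub_span2P; exists a, b; rewrite !scale_vec4 add_vec4; congr vec4; ring.
case=> /eqP ->; [move: Tpoint_pt1010 (ell_pt 0 1) | move: (Tpoint_pt0mu01 s0) (ell_pt 1 0)];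
  by rewrite ?mul0r ?mul1r => XT XL; rewrite XT XL andbT; case/and3P: XT.
Qed.

End CharTwo.

Theorem lemma6p1 (F : finFieldType) (hchar : 2%N \in [pchar F]) (hq : (8 <= #|F|)%N)
  (mu : F) (mu0 : mu != 0) (mu1 : mu != 1) (s : F) (hs : s ^+ 2 = mu) :
  [/\ (pt (vec4 (1 : F) 0 1 0) <= tangent (Some (1 : F)))%MS,
      (pt (vec4 0 mu 0 1) <= tangent (Some s))%MS,
      (forall X : 'M[F]_4, X \in PGpoints F -> (X <= ell mu)%MS -> Tpoint X ->
         X = pt (vec4 1 0 1 0) \/ X = pt (vec4 0 mu 0 1))
    & (forall A : 'M[F]_4, A \in Gq F -> nTpoints (ell mu *m A) = 2%N)].
Proof.
subst mu; have s0 : s != 0 by apply: contraNneq mu0 => ->; rewrite expr0n.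
split.
- exact: pt1010_sub_tangent.
- exact: pt0mu01_sub_tangent.
- by move=> X; apply: ell_Tpoint.
- move=> A /Gq_curve_preserving cpA.
  by rewrite nTpoints_mulmx ?nTpoints_ell // (leq_trans _ hq).
Qed.
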